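(* Let $G$ be a finite group. Then the non-inverse graph $\Gamma_{NI}(G)$ is minimally connected if and only if either every non-identity element of $G$ is self-inverse, or no non-identity element of $G$ is self-inverse.
   Context: The non-inverse graph $\Gamma_{NI}(G)$ of a group $G$ is the simple undirected graph with vertex set $G$ in which two distinct elements $x,y$ are adjacent if and only if $y\neq x^{-1}$. An element $x$ is self-inverse if $x=x^{-1}$. For a connected graph $\Gamma$, a vertex cut-set is a set $S$ of vertices such that $\Gamma-S$ is disconnected or has just one vertex, and the vertex connectivity $\kappa(\Gamma)$ is the smallest size of a vertex cut-set. $\Gamma$ is minimally connected if $\kappa(\Gamma-\epsilon)=\kappa(\Gamma)-1$ for every edge $\epsilon$ of $\Gamma$. *)

From mathcomp Require Import all_boot all_fingroup.
Set Implicit Arguments. Unset Strict Implicit. Unset Printing Implicit Defensive.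

(* A simple graph on a finite type T is a symmetric irreflexive relation e. *)

Definition induced_rel (T : finType) (e : rel T) (S : {set T}) : rel T :=
  fun u v => [&& e u v, u \notin S & v \notin S].

Definition vertex_cut (T : finType) (e : rel T) (S : {set T}) : bool :=
  (#|~: S| == 1) ||
  [exists u, exists v,
     [&& u \notin S, v \notin S & ~~ connect (induced_rel e S) u v]].

(* Vertex connectivity: minimal size of a vertex cut-set.  (The default #|T|
   is never reached when T is nonempty, since removing all but one vertex
   gives a cut-set of size #|T| - 1.) *)
Definition kappa (T : finType) (e : rel T) : nat :=
  \big[minn/#|T|]_(S : {set T} | vertex_cut e S) #|S|.

Definition graph_connected (T : finType) (e : rel T) : Prop :=
  forall u v : T, connect e u v.

Definition delete_edge (T : finType) (e : rel T) (x y : T) : rel T :=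
  fun u v => e u v && ~~ (((u == x) && (v == y)) || ((u == y) && (v == x))).

Definition minimally_connected (T : finType) (e : rel T) : Prop :=
  graph_connected e /\
  forall x y : T, e x y -> (kappa (delete_edge e x y)).+1 = kappa e.

Definition non_inverse_rel (gT : finGroupType) : rel gT :=
  fun x y => (x != y) && (y != x^-1)%g.

From mathcomp Require Import all_boot all_fingroup.
From mathcomp Require Import zify.
Set Implicit Arguments. Unset Strict Implicit. Unset Printing Implicit Defensive.

(* The non-inverse graph is the complete graph on G minus the perfect matching
   {x, x^-1} of the non-involutions, so every vertex has at most one
   non-neighbour.  A vertex cut leaves two nonempty parts with no edge between
   them; each part lies in the non-neighbourhood of any vertex of the other,
   so a cut leaves at most twice the maximal non-degree.  Hence kappa is n - 1
   if G has no non-involution and n - 2 otherwise.  Deleting an edge xy: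
   - if all elements are involutions, kappa drops from n - 1 to n - 2;
   - if no non-identity element is an involution, an endpoint z <> 1 is
     non-adjacent to z, z^-1 and the other endpoint, so kappa drops to n - 3;
   - in the mixed case the edge between 1 and an involution a joins the
     matching as a new pair {1, a}, and kappa stays n - 2. *)

Lemma bigmin_le (I : finType) (P : pred I) (F : I -> nat) x i0 :
  P i0 -> \big[minn/x]_(i | P i) F i <= F i0.
Proof.
move=> P_i0; have: i0 \in index_enum I by rewrite mem_index_enum.
elim: (index_enum I) => [//|j s IHs]; rewrite in_cons big_cons.
case/orP => [/eqP <-|/IHs le_s]; first by rewrite P_i0 geq_minl.
by case: (P j) => //; exact: leq_trans (geq_minr _ _) le_s.
Qed.

Section VertexConnectivity.
Variables (T : finType) (e : rel T).

Definition nadj (p : T) : {set T} := [set q | (q != p) && ~~ e p q].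

Lemma kappa_le S : vertex_cut e S -> kappa e <= #|S|.
Proof. exact: bigmin_le. Qed.

Lemma kappa_ge_card_compl c :
  (forall S, vertex_cut e S -> #|~: S| <= c) -> #|T| - c <= kappa e.
Proof.
move=> small_cuts; rewrite /kappa.
apply: (big_ind (fun k => #|T| - c <= k)); first exact: leq_subr.
  by move=> a b ha hb; rewrite leq_min ha hb.
by move=> S /small_cuts; rewrite -(cardsC S); lia.
Qed.

Lemma kappa_le_card_compl (O : {set T}) x y :
  x != y -> x \in O -> y \in O -> {in O, forall z, ~~ e x z} ->
  kappa e <= #|T| - #|O|.
Proof.
move=> neq_xy xO yO x_isolated.
rewrite -(cardsC O) addKn; apply: kappa_le; apply/orP; right.
apply/existsP; exists x; apply/existsP; exists y; rewrite !inE !negbK xO yO /=.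
apply/negP => /connectP [[|z p] /=]; first by move=> _ eq_yx; rewrite eq_yx eqxx in neq_xy.
by rewrite /induced_rel !inE !negbK => /andP [/and3P [exz _ /x_isolated]]; rewrite exz.
Qed.

Hypothesis e_sym : symmetric e.

Lemma nadj_sym a b : (b \in nadj a) = (a \in nadj b).
Proof. by rewrite !inE e_sym eq_sym. Qed.

Lemma vertex_cut_split S : vertex_cut e S -> #|~: S| != 1 ->
  exists A B : {set T}, [/\ #|~: S| = #|A| + #|B|, A != set0, B != set0,
    {in A, forall a, B \subset nadj a} & {in B, forall b, A \subset nadj b}].
Proof.
case/orP => [/eqP -> //|/existsP [u /existsP [v /and3P [uS vS not_uv]]]] _.
pose C := [set w | connect (induced_rel e S) u w].
have AB : {in ~: S :&: C, forall a, ~: S :\: C \subset nadj a}.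
  move=> a; rewrite !inE => /andP [aS ua]; apply/subsetP => b.
  rewrite !inE => /andP [ub bS]; apply/andP; split.
    by apply: contraNneq ub => ->.
  apply: contra ub => eab; apply: connect_trans ua (connect1 _).
  by rewrite /induced_rel eab aS bS.
exists (~: S :&: C), (~: S :\: C); split.
- by rewrite cardsID.
- by apply/set0Pn; exists u; rewrite !inE uS connect0.
- by apply/set0Pn; exists v; rewrite !inE vS not_uv.
- exact: AB.
- move=> b bB; apply/subsetP => a aA.
  by rewrite -nadj_sym; apply: (subsetP (AB a aA)).
Qed.

Lemma card_cut_compl_le d S : (forall p, #|nadj p| <= d) ->
  vertex_cut e S -> #|~: S| <= maxn 1 (d + d).
Proof.
move=> nadj_le cutS; have [-> | ne1] := eqVneq #|~: S| 1; first exact: leq_maxl.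
have [A [B [-> /set0Pn [a aA] /set0Pn [b bB] AB BA]]] := vertex_cut_split cutS ne1.
apply: leq_trans (leq_maxr _ _); apply: leq_add.
  exact: leq_trans (subset_leq_card (BA b bB)) (nadj_le b).
exact: leq_trans (subset_leq_card (AB a aA)) (nadj_le a).
Qed.

(* Two opposite parts of size 2 would give four vertices of non-degree 2. *)
Lemma card_cut_compl_le3 (X : {set T}) S : (forall p, #|nadj p| <= 2) ->
  (forall p, 1 < #|nadj p| -> p \in X) -> #|X| <= 2 ->
  vertex_cut e S -> #|~: S| <= 3.
Proof.
move=> nadj_le2 X_big cardX cutS; have [-> // | ne1] := eqVneq #|~: S| 1.
have [A [B [-> /set0Pn [a aA] /set0Pn [b bB] AB BA]]] := vertex_cut_split cutS ne1.
have cardA : #|A| <= 2 := leq_trans (subset_leq_card (BA b bB)) (nadj_le2 b).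
have cardB : #|B| <= 2 := leq_trans (subset_leq_card (AB a aA)) (nadj_le2 a).
case: (leqP #|A| 1) => [|A2]; first by lia.
case: (leqP #|B| 1) => [|B2]; first by lia.
have AX : A \subset X.
  apply/subsetP => a' a'A; apply: X_big.
  exact: leq_trans B2 (subset_leq_card (AB a' a'A)).
have bX : b \in X by apply: X_big; exact: leq_trans A2 (subset_leq_card (BA b bB)).
have eqAX : A = X by apply/eqP; rewrite eqEcard AX (leq_trans cardX A2).
by rewrite -eqAX in bX; move: (subsetP (AB b bX) b bB); rewrite inE eqxx.
Qed.

End VertexConnectivity.

Lemma delete_edge_sym (T : finType) (e : rel T) x y :
  symmetric e -> symmetric (delete_edge e x y).
Proof.
move=> e_sym u v; rewrite /delete_edge e_sym; congr (_ && ~~ _).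
by case: (u == x) (u == y) (v == x) (v == y) => [] [] [] [].
Qed.

Lemma nadj_delete_edge (T : finType) (e : rel T) x y p :
  nadj (delete_edge e x y) p \subset (if p == x then y else x) |: nadj e p.
Proof.
apply/subsetP => q; rewrite !inE /delete_edge negb_and negbK.
case/andP => -> /orP [-> | /orP [] /andP [/eqP -> /eqP ->]] /=; rewrite ?orbT ?eqxx //.
by case: (y =P x) => [->|]; rewrite eqxx.
Qed.

Lemma nadj_delete_edge_other (T : finType) (e : rel T) x y p :
  p != x -> p != y -> nadj (delete_edge e x y) p = nadj e p.
Proof.
move=> px py; apply/setP => q.
by rewrite !inE /delete_edge (negbTE px) (negbTE py) /= andbT.
Qed.

Lemma delete_edge_endpoints (T : finType) (e : rel T) x y :
  delete_edge e x y x y = false.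
Proof. by rewrite /delete_edge !eqxx andbF. Qed.

Section NonInverseGraph.
Variable gT : finGroupType.
Local Notation e := (@non_inverse_rel gT).
Local Notation n := #|gT|.
Local Open Scope group_scope.

Lemma non_inverse_sym : symmetric e.
Proof.
by move=> u v; rewrite /non_inverse_rel eq_sym; congr (_ && _); rewrite eq_sym eqg_invLR.
Qed.

Lemma non_inverse_irr p : e p p = false.
Proof. by rewrite /non_inverse_rel eqxx. Qed.

Lemma non_inverse_invg p : e p p^-1 = false.
Proof. by rewrite /non_inverse_rel eqxx andbF. Qed.

Lemma nadj_non_inverse p : nadj e p \subset [set p^-1].
Proof.
apply/subsetP => q; rewrite !inE /non_inverse_rel negb_and !negbK.
by case/andP => /negbTE; rewrite eq_sym => ->.
Qed.

Lemma nadj_non_inverse_involution p : p^-1 = p -> nadj e p = set0.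
Proof.
move=> inv_p; apply/setP => q; rewrite in_set0; apply/negbTE/negP => q_nadj.
have := subsetP (nadj_non_inverse p) q q_nadj; rewrite inv_p inE => /eqP q_p.
by move: q_nadj; rewrite q_p inE eqxx.
Qed.

Lemma card_nadj_non_inverse p : #|nadj e p| <= 1.
Proof. by rewrite -(cards1 p^-1) subset_leq_card ?nadj_non_inverse. Qed.

Lemma non_inverse_connected : graph_connected e.
Proof.
move=> u v; have [-> | neq_uv] := eqVneq u v; first exact: connect0.
have [euv | not_euv] := boolP (e u v); first exact: connect1.
have v_inv : v = u^-1.
  by apply/set1P/(subsetP (nadj_non_inverse u)); rewrite inE eq_sym neq_uv.
have u1 : u != 1 by apply: contra_neq neq_uv => u1; rewrite v_inv u1 invg1.
apply: (@connect_trans _ _ 1); apply: connect1; rewrite /non_inverse_rel.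
  by rewrite u1 eq_sym invg_eq1.
by rewrite v_inv invg1 invg_eq1 eq_sym invg_eq1 u1.
Qed.

Lemma kappa_non_inverse_ge : n - 2 <= kappa e.
Proof.
apply: kappa_ge_card_compl => S.
exact: (card_cut_compl_le non_inverse_sym card_nadj_non_inverse).
Qed.

Lemma kappa_non_inverse_le (a : gT) : a^-1 != a -> kappa e <= n - 2.
Proof.
move=> inv_a; have card_aai : #|[set a; a^-1]| = 2 by rewrite cards2 eq_sym inv_a.
rewrite -card_aai.
apply: (kappa_le_card_compl (x := a) (y := a^-1)); rewrite ?inE ?eqxx ?orbT //.
  by rewrite eq_sym.
by move=> z; rewrite !inE => /orP [] /eqP ->; rewrite ?non_inverse_irr ?non_inverse_invg.
Qed.

Lemma kappa_non_inverse_involutive : (forall x : gT, x^-1 = x) -> kappa e = n.-1.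
Proof.
move=> inv_id; apply/eqP; rewrite eqn_leq; apply/andP; split.
  by rewrite -(cardsC1 1) kappa_le // /vertex_cut setCK cards1.
rewrite -subn1; apply: kappa_ge_card_compl => S.
by apply: (card_cut_compl_le (d := 0) non_inverse_sym) => p;
  rewrite nadj_non_inverse_involution ?cards0.
Qed.

Lemma kappa_delete_edge_involutive x y : (forall x : gT, x^-1 = x) -> e x y ->
  (kappa (delete_edge e x y)).+1 = kappa e.
Proof.
move=> inv_id /andP [neq_xy _].
have card_xy : #|[set x; y]| = 2 by rewrite cards2 neq_xy.
have n2 : 2 <= n by rewrite -card_xy max_card.
have ge : n - 2 <= kappa (delete_edge e x y).
  apply: kappa_ge_card_compl => S.
  apply: (card_cut_compl_le (d := 1) (delete_edge_sym x y non_inverse_sym)) => p.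
  apply: leq_trans (subset_leq_card (nadj_delete_edge e x y p)) _.
  by rewrite nadj_non_inverse_involution // setU0 cards1.
have le : kappa (delete_edge e x y) <= n - 2.
  rewrite -card_xy; apply: (kappa_le_card_compl neq_xy); rewrite ?inE ?eqxx ?orbT //.
  move=> z; rewrite !inE => /orP [] /eqP ->.
    by rewrite /delete_edge non_inverse_irr.
  by rewrite delete_edge_endpoints.
by rewrite kappa_non_inverse_involutive //; lia.
Qed.

Lemma kappa_delete_edge_ge3 x y : n - 3 <= kappa (delete_edge e x y).
Proof.
apply: kappa_ge_card_compl => S.
apply: (card_cut_compl_le3 (X := [set x; y]) (delete_edge_sym x y non_inverse_sym)).
- move=> p; apply: leq_trans (subset_leq_card (nadj_delete_edge e x y p)) _.
  by apply: leq_trans (leq_card_setU _ _) _; rewrite cards1 ltnS card_nadj_non_inverse.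
- move=> p; apply: contraTT; rewrite !inE negb_or => /andP [px py].
  by rewrite nadj_delete_edge_other // -leqNgt card_nadj_non_inverse.
- by rewrite cards2; case: (_ != _).
Qed.

Lemma kappa_delete_edge_le3 x y z w :
  ((z == x) && (w == y)) || ((z == y) && (w == x)) -> z^-1 != z -> e z w ->
  kappa (delete_edge e x y) + 3 <= n.
Proof.
move=> zw_edge inv_z /andP [neq_zw neq_wzi].
set O := w |: [set z; z^-1].
have card_O : #|O| = 3.
  by rewrite cardsU1 cards2 eq_sym inv_z !inE negb_or (eq_sym w) neq_zw neq_wzi.
have n3 : 3 <= n by rewrite -card_O max_card.
suff: kappa (delete_edge e x y) <= n - 3 by lia.
rewrite -card_O; apply: (kappa_le_card_compl neq_zw); rewrite ?inE ?eqxx ?orbT //.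
move=> u; rewrite !inE => /or3P [] /eqP ->.
- by rewrite /delete_edge zw_edge andbF.
- by rewrite /delete_edge non_inverse_irr.
- by rewrite /delete_edge non_inverse_invg.
Qed.

Lemma kappa_delete_edge_no_involution x y :
  (forall z : gT, z != 1 -> z^-1 != z) -> e x y ->
  (kappa (delete_edge e x y)).+1 = kappa e.
Proof.
move=> no_inv exy; have /andP [neq_xy _] := exy.
have [z [w [z1 zw_edge ezw]]] : exists z w : gT,
    [/\ z != 1, ((z == x) && (w == y)) || ((z == y) && (w == x)) & e z w].
  have [x1 | x1] := eqVneq x 1; last by exists x, y; rewrite !eqxx.
  by exists y, x; rewrite !eqxx orbT non_inverse_sym -x1 eq_sym.
have inv_z := no_inv z z1.
have := kappa_delete_edge_le3 zw_edge inv_z ezw; have := kappa_delete_edge_ge3 x y.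
have := kappa_non_inverse_le inv_z; have := kappa_non_inverse_ge; lia.
Qed.

Lemma kappa_delete_edge_involution_ge2 (a : gT) :
  a^-1 = a -> n - 2 <= kappa (delete_edge e 1 a).
Proof.
move=> inv_a; apply: kappa_ge_card_compl => S.
apply: (card_cut_compl_le (d := 1) (delete_edge_sym 1 a non_inverse_sym)) => p.
case: (boolP ((p == 1) || (p == a))) => [p1a | /norP [p1 pa]].
  apply: leq_trans (subset_leq_card (nadj_delete_edge e 1 a p)) _.
  rewrite nadj_non_inverse_involution ?setU0 ?cards1 //.
  by case/orP: p1a => /eqP ->; rewrite ?invg1.
by rewrite nadj_delete_edge_other ?card_nadj_non_inverse.
Qed.

End NonInverseGraph.

Theorem mainTheorem10 (gT : finGroupType) :
  minimally_connected (@non_inverse_rel gT) <->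
  (forall x : gT, x != 1%g -> (x^-1)%g = x) \/
  (forall x : gT, x != 1%g -> (x^-1)%g != x).
Proof.
split=> [[_ minimal] | involutions].
  have [/forallP all_inv | /forallPn [b inv_b]] := boolP [forall x : gT, (x^-1 == x)%g].
    by left=> x _; apply/eqP.
  right=> x x1; apply/negP => /eqP inv_x.
  have e1x : non_inverse_rel 1%g x by rewrite /non_inverse_rel invg1 eq_sym x1.
  have := minimal _ _ e1x; have := kappa_delete_edge_involution_ge2 inv_x.
  have := kappa_non_inverse_le inv_b; lia.
split=> [|x y]; first exact: non_inverse_connected.
case: involutions => [inv_nontriv | no_inv]; last exact: kappa_delete_edge_no_involution.
apply: kappa_delete_edge_involutive => z.
by have [->|/inv_nontriv] := eqVneq z 1%g; rewrite ?invg1.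
Qed.
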